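(* For every $m\in\mathbb Z\setminus\{0\}$ and every $\xi\in\mathbb Z_m$, the group $\overline{BS}(m,\xi)$ is not finitely presented.
   Context: For $p,q\in\mathbb Z\setminus\{0\}$, $BS(p,q)=\langle a,b\mid ab^pa^{-1}=b^q\rangle$, marked by $(a,b)$. The space of marked groups $\mathcal G_2$ is the set of normal subgroups of $\mathbb F(a,b)$ with the ultrametric $d(N_1,N_2)=e^{-\lambda}$, $\lambda$ the minimal word length of an element of $N_1\triangle N_2$. $\mathbb Z_m$ is the ring of $m$-adic integers. For $\xi\in\mathbb Z_m$, $\overline{BS}(m,\xi)$ denotes the limit in $\mathcal G_2$ of $BS(m,\xi_n)$ for any sequence of integers $(\xi_n)$ with $|\xi_n|\to\infty$ and $\xi_n\to\xi$ in $\mathbb Z_m$ (the limit exists and is independent of the sequence). *)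

From HB Require Import structures.
From mathcomp Require Import all_boot all_order all_algebra.
Set Implicit Arguments. Unset Strict Implicit. Unset Printing Implicit Defensive.
Import Order.TTheory GRing.Theory Num.Theory.

Inductive letter := LA | LAi | LB | LBi.
Definition word := list letter.

Definition inv_letter (x : letter) : letter :=
  match x with LA => LAi | LAi => LA | LB => LBi | LBi => LB end.
Definition letter_eqb (x y : letter) : bool :=
  match x, y with
  | LA, LA | LAi, LAi | LB, LB | LBi, LBi => true | _, _ => false end.

Lemma letter_eqP : Equality.axiom letter_eqb.
Proof. by case; case; constructor. Qed.
HB.instance Definition _ := hasDecEq.Build letter letter_eqP.

Definition inv_word (w : word) : word := rev (map inv_letter w).

Definition reduce (w : word) : word :=
  foldr (fun x acc => match acc with
                      | y :: t => if letter_eqb y (inv_letter x) then t else x :: acc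
                      | [::] => [:: x] end) [::] w.

Definition is_normal (N : word -> Prop) : Prop :=
  [/\ (forall u v, reduce u = reduce v -> (N u <-> N v)),
      N [::],
      (forall u v, N u -> N v -> N (u ++ v)),
      (forall u, N u -> N (inv_word u)) &
      (forall g u, N u -> N (g ++ u ++ inv_word g))].

Definition nclosure (R : word -> Prop) (w : word) : Prop :=
  forall N, is_normal N -> (forall r, R r -> N r) -> N w.

(* The marked group F(a,b)/N is finitely presented:
   N is the normal closure of a finite set of words. *)
Definition finitely_presented (N : word -> Prop) : Prop :=
  exists rs : list word, forall w, N w <-> nclosure (fun r => r \in rs) w.

Definition bpow (k : int) : word :=
  match k with Posz n => nseq n LB | Negz n => nseq n.+1 LBi end.

Definition bs_rel (p q : int) : word :=
  [:: LA] ++ bpow p ++ [:: LAi] ++ bpow (- q).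

(* kernel of F(a,b) -> BS(p,q), i.e. BS(p,q) as a point of the space of marked groups *)
Definition BS (p q : int) : word -> Prop := nclosure (fun r => r = bs_rel p q).

(* ---- Convergence in the space of marked groups G_2 ----
   d(N_n, N) -> 0 : for each lambda, eventually N_n and N agree on all
   words of length <= lambda. *)
Definition marked_converges (Ns : nat -> word -> Prop) (N : word -> Prop) : Prop :=
  forall lambda : nat, exists n0 : nat, forall n, (n0 <= n)%N ->
    forall w : word, (size w <= lambda)%N -> (Ns n w <-> N w).

(* ---- m-adic integers ----
   An element of Z_m is represented by a compatible sequence of integers
   xi k (a representative modulo m^k), with xi (k+1) = xi k mod m^k. *)
Definition madic (m : int) (xi : nat -> int) : Prop :=
  forall k : nat, (xi k.+1 = xi k %[mod m ^+ k])%Z.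

Definition madic_converges (m : int) (xs : nat -> int) (xi : nat -> int) : Prop :=
  forall k : nat, exists n0 : nat, forall n, (n0 <= n)%N ->
    (xs n = xi k %[mod m ^+ k])%Z.

Definition tends_to_infty (xs : nat -> int) : Prop :=
  forall M : nat, exists n0 : nat, forall n, (n0 <= n)%N -> (M < `|xs n|)%N.

From mathcomp Require Import all_boot all_order all_algebra.
From mathcomp Require Import zify ring lra.
Import Order.TTheory GRing.Theory Num.Theory.
Set Implicit Arguments. Unset Strict Implicit.

(* Suppose N were the normal closure of finitely many relators, all of length at
   most L.  They lie in BS(m, q) for q = xs n with n large, so they act trivially
   on Q through a |-> (y |-> (m/q) y), b |-> (y |-> y + 1).  Reading a word as a
   walk in a-height, this action expands as a polynomial in q/m whose coefficients
   are the b-exponent sums at each height; since |q/m| is huge, a short relator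
   must return to its starting height with zero b-exponent sum at every height.
   Such words act trivially on Z^3 when a moves a position p and b increments y1
   at p = 2L+1 and adds y1 to y2 at p = 0, because a walk of length L cannot
   visit both positions.  So N acts trivially.  But with K = 2L+1 the commutator
   [a^K b^(m^K) a^-K, b] is [b^(q^K), b] = 1 in every BS(m, q), hence lies in N,
   while it sends (0,0,0) to (0,0,m^K). *)

Definition rstep (x : letter) (acc : word) : word :=
  match acc with
  | y :: t => if letter_eqb y (inv_letter x) then t else x :: acc
  | [::] => [:: x] end.

Lemma reduce_cons x w : reduce (x :: w) = rstep x (reduce w).
Proof. by []. Qed.

Lemma inv_letterK : involutive inv_letter.
Proof. by case. Qed.

Lemma letter_eqbE x y : letter_eqb x y = (x == y).
Proof. by []. Qed.

Lemma inv_word_cons x w : inv_word (x :: w) = inv_word w ++ [:: inv_letter x].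
Proof. by rewrite /inv_word /= rev_cons cats1. Qed.

Lemma inv_word_cat u v : inv_word (u ++ v) = inv_word v ++ inv_word u.
Proof. by rewrite /inv_word map_cat rev_cat. Qed.

Lemma inv_wordK : involutive inv_word.
Proof.
move=> w; rewrite /inv_word map_rev revK -map_comp.
by rewrite (eq_map (g := id)) ?map_id // => x; exact: inv_letterK.
Qed.

Fixpoint reduced (w : word) : bool :=
  match w with
  | x :: ((y :: _) as t) => (y != inv_letter x) && reduced t
  | _ => true end.

Lemma reduced_tail x t : reduced (x :: t) -> reduced t.
Proof. by case: t => //= y t /andP[]. Qed.

Lemma rstep_reduced x r : reduced r -> reduced (rstep x r).
Proof.
case: r => [|y t] //= Hr.
rewrite letter_eqbE; case: eqP => [_|ne].
- exact: reduced_tail Hr.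
- by rewrite /= Hr andbT; apply/eqP.
Qed.

Lemma reduce_reduced w : reduced (reduce w).
Proof. by elim: w => //= x w IH; exact: rstep_reduced. Qed.

Lemma rstepK x r : reduced r -> rstep x (rstep (inv_letter x) r) = r.
Proof.
case: r => [|y t] /= Hr.
- by rewrite letter_eqbE eqxx.
- rewrite letter_eqbE inv_letterK; case: eqP => [ey|ne].
  + subst y; case: t Hr => [|z t'] //= /andP[nz _].
    by rewrite letter_eqbE (negbTE nz).
  + by rewrite /rstep letter_eqbE eqxx.
Qed.

Lemma foldr_rstep_reduce r a :
  reduced r -> foldr rstep r a = foldr rstep r (reduce a).
Proof.
move=> Hr; have red b : reduced (foldr rstep r b).
  by elim: b => //= x b IH; exact: rstep_reduced.
elim: a => [|x a IH] //=; rewrite -/(reduce a) IH.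
case E: (reduce a) => [|y t] //=.
rewrite letter_eqbE; case: eqP => [->|] //=.
by rewrite rstepK.
Qed.

Lemma reduce_cat u v : reduce (u ++ v) = foldr rstep (reduce v) u.
Proof. exact: foldr_cat. Qed.

Lemma reduce_catl u u' v :
  reduce u = reduce u' -> reduce (u ++ v) = reduce (u' ++ v).
Proof.
move=> e; rewrite !reduce_cat (foldr_rstep_reduce _ (reduce_reduced v)) e.
by rewrite -(foldr_rstep_reduce _ (reduce_reduced v)).
Qed.

Lemma reduce_catr u v v' :
  reduce v = reduce v' -> reduce (u ++ v) = reduce (u ++ v').
Proof. by move=> e; rewrite !reduce_cat e. Qed.

Lemma reduce_cancel x w : reduce (x :: inv_letter x :: w) = reduce w.
Proof. by rewrite !reduce_cons rstepK // reduce_reduced. Qed.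

Lemma reduce_cat_inv s t : reduce (s ++ inv_word s ++ t) = reduce t.
Proof.
elim: s t => [|x s IH] t //.
by rewrite inv_word_cons -catA reduce_cons IH -reduce_cons reduce_cancel.
Qed.

Lemma reduce_inv_cat s t : reduce (inv_word s ++ s ++ t) = reduce t.
Proof. by rewrite -{2}(inv_wordK s) reduce_cat_inv. Qed.

Section WordAction.
Variables (T : Type) (step : letter -> T -> T).
Hypothesis stepK : forall x p, step (inv_letter x) (step x p) = p.

Definition act (w : word) (p : T) : T := foldl (fun p x => step x p) p w.

Lemma act_cat u v p : act (u ++ v) p = act v (act u p).
Proof. exact: foldl_cat. Qed.

Lemma act_cons x w p : act (x :: w) p = act w (step x p).
Proof. by []. Qed.

Lemma act_reduce w p : act (reduce w) p = act w p.
Proof.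
elim: w p => [|x w IH] p //=; rewrite -/(reduce w) -IH.
case: (reduce w) => [|y t] //=; rewrite letter_eqbE; case: eqP => // ->.
by rewrite /act /= stepK.
Qed.

Lemma act_invK u p : act (inv_word u) (act u p) = p.
Proof.
elim: u p => [|x u IH] p //=.
by rewrite inv_word_cons act_cat act_cons IH /act /= stepK.
Qed.

Definition act_ker (w : word) : Prop := forall p, act w p = p.

Lemma act_ker_normal : is_normal act_ker.
Proof.
split=> [u v e|//|u v Hu Hv p|u Hu p|g u Hu p].
- split=> H p; first by rewrite -act_reduce -e act_reduce.
  by rewrite -act_reduce e act_reduce.
- by rewrite act_cat Hu Hv.
- by rewrite -{2}(act_invK u p) Hu.
- by rewrite !act_cat Hu act_invK.
Qed.

Lemma nclosure_act_ker (R : word -> Prop) w :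
  nclosure R w -> (forall r, R r -> act_ker r) -> act_ker w.
Proof. by apply; exact: act_ker_normal. Qed.

End WordAction.

Section NormalCongruence.
Variable N : word -> Prop.
Hypothesis hN : is_normal N.

Lemma normal_reduce u v : reduce u = reduce v -> N u -> N v.
Proof. by case: hN => H _ _ _ _ e; case: (H u v e). Qed.

Lemma normal_nil : N [::].
Proof. by case: hN. Qed.

Lemma normal_cat u v : N u -> N v -> N (u ++ v).
Proof. by case: hN => _ _ H _ _; exact: H. Qed.

Lemma normal_inv u : N u -> N (inv_word u).
Proof. by case: hN => _ _ _ H _; exact: H. Qed.

Lemma normal_conj g u : N u -> N (g ++ u ++ inv_word g).
Proof. by case: hN => _ _ _ _ H; exact: H. Qed.

Definition eqvN u v := N (u ++ inv_word v).

Lemma eqvN_reduce u v : reduce u = reduce v -> eqvN u v.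
Proof.
move=> e; apply: (normal_reduce (u := [::])); last exact: normal_nil.
by rewrite (reduce_catl _ e) -[v ++ _]cats0 -catA reduce_cat_inv.
Qed.

Lemma eqvN_refl u : eqvN u u.
Proof. exact: eqvN_reduce. Qed.

Lemma eqvN_trans u v w : eqvN u v -> eqvN v w -> eqvN u w.
Proof.
move=> H1 H2; apply: (normal_reduce _ (normal_cat H1 H2)).
by rewrite -catA; apply: reduce_catr; exact: reduce_inv_cat.
Qed.

Lemma eqvN_cong s t u v : eqvN u v -> eqvN (s ++ u ++ t) (s ++ v ++ t).
Proof.
move=> H; apply: (normal_reduce _ (normal_conj s H)).
rewrite /eqvN !inv_word_cat -!catA; do 2 apply: reduce_catr.
by rewrite reduce_cat_inv.
Qed.

Lemma eqvN_cat u u' v v' : eqvN u u' -> eqvN v v' -> eqvN (u ++ v) (u' ++ v').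
Proof.
move=> H1 H2; apply: (eqvN_trans (v := u' ++ v)).
- exact: (eqvN_cong [::] v H1).
- by have := eqvN_cong u' [::] H2; rewrite !cats0.
Qed.

Lemma eqvN_inv u v : eqvN u v -> eqvN (inv_word u) (inv_word v).
Proof.
move=> H; have := normal_conj (inv_word u) (normal_inv H).
rewrite /eqvN inv_word_cat !inv_wordK => H'; apply: (normal_reduce _ H').
apply: reduce_catr; rewrite -catA -{2}(cats0 v); apply: reduce_catr.
by rewrite -[inv_word u ++ u]cats0 -catA reduce_inv_cat.
Qed.

Lemma normal_eqvN_nil w : eqvN w [::] -> N w.
Proof. by rewrite /eqvN /= cats0. Qed.

End NormalCongruence.

Local Open Scope ring_scope.

Lemma inv_bpow z : inv_word (bpow z) = bpow (- z).
Proof.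
have E n x : inv_word (nseq n x) = nseq n (inv_letter x).
  by rewrite /inv_word map_nseq rev_nseq.
by case: z => [[|n]|n] //; apply: E.
Qed.

Lemma reduce_bpowS z : reduce (bpow (z + 1)) = reduce (LB :: bpow z).
Proof.
case: z => [n|[|k]] //; first by rewrite -PoszD addn1.
have -> : Negz k.+1 + 1 = Negz k by rewrite !NegzE; lia.
by rewrite -[bpow (Negz k.+1)]/(LBi :: bpow (Negz k)) reduce_cancel.
Qed.

Lemma reduce_bpowB1 z : reduce (bpow (z - 1)) = reduce (LBi :: bpow z).
Proof.
case: z => [[|n]|k] //.
- have -> : Posz n.+1 - 1 = Posz n by lia.
  by rewrite -[bpow (Posz n.+1)]/(LB :: bpow n) reduce_cancel.
- by have -> : Negz k - 1 = Negz k.+1 by rewrite !NegzE; lia.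
Qed.

Lemma reduce_bpowD x y : reduce (bpow (x + y)) = reduce (bpow x ++ bpow y).
Proof.
case: x => n; elim: n => [|n IH].
- by rewrite add0r.
- have -> : Posz n.+1 + y = (Posz n + y) + 1 by lia.
  by rewrite reduce_bpowS reduce_cons IH.
- have -> : Negz 0 + y = y - 1 by rewrite NegzE; lia.
  by rewrite reduce_bpowB1.
- have -> : Negz n.+1 + y = (Negz n + y) - 1 by rewrite !NegzE; lia.
  by rewrite reduce_bpowB1 reduce_cons IH.
Qed.

Definition conj_bpow (x : int) : word := LA :: bpow x ++ [:: LAi].

Lemma reduce_conj_bpowD x y :
  reduce (conj_bpow (x + y)) = reduce (conj_bpow x ++ conj_bpow y).
Proof.
rewrite /conj_bpow cat_cons !reduce_cons; congr (rstep LA _).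
rewrite -catA reduce_cat [in RHS]reduce_cat.
rewrite (_ : reduce ([:: LAi] ++ LA :: _) = reduce (bpow y ++ [:: LAi])).
  by rewrite -(reduce_cat (bpow x)) catA -reduce_cat; apply: reduce_catl; exact: reduce_bpowD.
exact: (reduce_cancel LAi).
Qed.

Lemma inv_conj_bpow x : inv_word (conj_bpow x) = conj_bpow (- x).
Proof. by rewrite /conj_bpow inv_word_cons inv_word_cat inv_bpow. Qed.

Definition deep_conj (m : int) (K : nat) : word :=
  nseq K LA ++ bpow (m ^+ K) ++ nseq K LAi.

Definition deep_comm (m : int) (K : nat) : word :=
  deep_conj m K ++ [:: LB] ++ inv_word (deep_conj m K) ++ [:: LBi].

Section BSRelation.
Variables (m q : int) (N : word -> Prop).
Hypotheses (hN : is_normal N) (hrel : N (bs_rel m q)).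

Lemma eqvN_conj_bpow_nat (n : nat) :
  eqvN N (conj_bpow (m * n%:Z)) (bpow (q * n%:Z)).
Proof.
elim: n => [|n IH]; first by rewrite !mulr0; apply: (eqvN_reduce hN).
have -> : m * n.+1%:Z = m * n%:Z + m by rewrite intS; ring.
have -> : q * n.+1%:Z = q * n%:Z + q by rewrite intS; ring.
apply: (eqvN_trans hN (v := conj_bpow (m * n%:Z) ++ conj_bpow m)).
  by apply: (eqvN_reduce hN); exact: reduce_conj_bpowD.
apply: (eqvN_trans hN (v := bpow (q * n%:Z) ++ bpow q)).
  by apply: eqvN_cat IH _; rewrite // /eqvN inv_bpow /conj_bpow cat_cons -catA.
by apply: (eqvN_reduce hN); rewrite reduce_bpowD.
Qed.

Lemma eqvN_conj_bpow (k : int) : eqvN N (conj_bpow (m * k)) (bpow (q * k)).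
Proof.
case: k => n; first exact: eqvN_conj_bpow_nat.
rewrite NegzE !mulrN -inv_conj_bpow -inv_bpow.
by apply: eqvN_inv => //; exact: eqvN_conj_bpow_nat.
Qed.

Lemma eqvN_deep_conj (j : nat) (k : int) :
  eqvN N (nseq j LA ++ bpow (m ^+ j * k) ++ nseq j LAi) (bpow (q ^+ j * k)).
Proof.
elim: j k => [|j IH] k; first by rewrite /= cats0 !expr0 !mul1r; exact: eqvN_refl.
have -> : m ^+ j.+1 * k = m ^+ j * (m * k) by rewrite exprSr; ring.
have -> : nseq j.+1 LAi = nseq j LAi ++ [:: LAi] by rewrite -addn1 nseqD.
have := eqvN_cong hN [:: LA] [:: LAi] (IH (m * k)).
rewrite /= -!catA => /(eqvN_trans hN); apply.
have -> : q ^+ j.+1 * k = q * (q ^+ j * k) by rewrite exprS; ring.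
by have := eqvN_conj_bpow (q ^+ j * k); rewrite mulrCA.
Qed.

Lemma normal_deep_comm (K : nat) : N (deep_comm m K).
Proof.
apply: normal_eqvN_nil => //.
have Hz : eqvN N (deep_conj m K) (bpow (q ^+ K)).
  by have := eqvN_deep_conj K 1; rewrite !mulr1.
set B := bpow (q ^+ K).
apply: (eqvN_trans hN (v := B ++ [:: LB] ++ inv_word B ++ [:: LBi])).
  apply: eqvN_cat => //; apply: eqvN_cat => //; first exact: eqvN_refl.
  by apply: eqvN_cat => //; [exact: eqvN_inv | exact: eqvN_refl].
apply: eqvN_reduce => //.
rewrite catA (reduce_catl (u' := [:: LB] ++ B)).
  by rewrite -catA cat1s reduce_cons reduce_cat_inv.
by rewrite /B -[[:: LB]]/(bpow 1) -!reduce_bpowD addrC.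
Qed.

End BSRelation.

Lemma BS_deep_comm m q K : BS m q (deep_comm m K).
Proof. by move=> N hN hR; apply: normal_deep_comm => //; exact: hR. Qed.

Lemma eq0_of_small_int_coefs (R : realFieldType) (t : R) (B n : nat) (c : nat -> int) :
  1 <= `|t| -> B%:R * n%:R < `|t| ->
  (forall j, (j < n)%N -> `|c j| <= B%:Z) ->
  \sum_(j < n) (c j)%:~R * t ^+ j = 0 ->
  forall j, (j < n)%N -> c j = 0.
Proof.
elim: n c => [|n IH] c t1 tB cB S0 j //.
rewrite big_ord_recr /= in S0; set S := \sum_(i < n) _ in S0.
have boundS : `|t| * `|S| <= (B%:R * n%:R) * `|t| ^+ n.
  apply: (le_trans (ler_pM _ _ (lexx _) (ler_norm_sum _ _ _))) => //.
  rewrite mulr_sumr (le_trans (y := \sum_(i < n) B%:R * `|t| ^+ n)) //.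
    apply: ler_sum => i _.
    rewrite normrM normrX -intr_norm mulrA (mulrC `|t|) -mulrA -exprS.
    apply: ler_pM; rewrite ?exprn_ge0 //.
      by rewrite -[B%:R]/((B%:Z)%:~R) ler_int cB // ltnS ltnW.
    exact: (ler_weXn2l t1 (ltn_ord i)).
  by rewrite sumr_const card_ord -(mulr_natr _ n) mulrAC mul1r mulr_natr.
(* Otherwise the top term dominates: |t|^(n+1) <= |t| |S| <= B n |t|^n. *)
have cn0 : c n = 0.
  apply/eqP/negPn/negP => cn.
  have tn : 0 < `|t| ^+ n by apply: exprn_gt0; lra.
  have lead : `|t| ^+ n <= `|S|.
    rewrite (_ : S = - ((c n)%:~R * t ^+ n)); last by apply/eqP; rewrite -addr_eq0 S0.
    rewrite normrN normrM normrX -intr_norm -{1}(mul1r (`|t| ^+ n)).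
    by apply: ler_pM; rewrite ?exprn_ge0 // ler1z; move/eqP: cn; lia.
  have : `|t| * `|t| ^+ n <= (B%:R * n%:R) * `|t| ^+ n.
    by apply: le_trans boundS; apply: ler_pM; rewrite ?exprn_ge0.
  rewrite ler_pM2r //.
  have : B%:R * n%:R <= B%:R * (n.+1)%:R :> R by apply: ler_pM; rewrite ?ler_nat.
  lra.
rewrite cn0 mul0r addr0 in S0.
rewrite ltnS leq_eqVlt => /orP[/eqP -> //|]; apply: IH => // [|i lin].
  by apply: le_lt_trans tB; apply: ler_pM; rewrite ?ler_nat.
by rewrite cB // ltnW.
Qed.

Fixpoint a_height (x : int) (w : word) : int :=
  match w with
  | [::] => x
  | LA :: w => a_height (x + 1) w
  | LAi :: w => a_height (x - 1) w
  | _ :: w => a_height x w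
  end.

Fixpoint b_count (x : int) (w : word) (z : int) : int :=
  match w with
  | [::] => 0
  | LA :: w => b_count (x + 1) w z
  | LAi :: w => b_count (x - 1) w z
  | LB :: w => (x == z)%:Z + b_count x w z
  | LBi :: w => b_count x w z - (x == z)%:Z
  end.

Lemma a_height_shift w x d : a_height (x + d) w = a_height x w + d.
Proof.
elim: w x => [|l w IH] x //=.
by case: l; rewrite -?IH; congr a_height; ring.
Qed.

Lemma b_count_shift w x z d : b_count (x + d) w (z + d) = b_count x w z.
Proof.
elim: w x => [|l w IH] x //=.
have -> : (x + d == z + d) = (x == z) by apply/eqP/eqP => [|->]; [lia|].
by case: l; rewrite -?IH //; congr b_count; ring.
Qed.

Lemma a_height_dist w x : `|a_height x w - x| <= (size w)%:Z.
Proof.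
elim: w x => [|l w IH] x /=; first by rewrite subrr.
case: l; move: (IH (x + 1)) (IH (x - 1)) (IH x); lia.
Qed.

Lemma b_count_bound w x z : `|b_count x w z| <= (size w)%:Z.
Proof.
elim: w x => [|l w IH] x //=.
case: l; move: (IH (x + 1)) (IH (x - 1)) (IH x); case: (x == z); lia.
Qed.

Lemma b_count_far w x z : (size w)%:Z < `|z - x| -> b_count x w z = 0.
Proof.
elim: w x => [|l w IH] x //= H.
by case: l; rewrite IH; [| lia | | lia | case: eqP; lia | lia | case: eqP; lia | lia].
Qed.

Definition aff_step (s : rat) (x : letter) (y : rat) : rat :=
  match x with LA => s * y | LAi => y / s | LB => y + 1 | LBi => y - 1 end.

Section AffineAction.
Variable s : rat.
Hypothesis s0 : s != 0.

Lemma aff_stepK x y : aff_step s (inv_letter x) (aff_step s x y) = y.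
Proof. by case: x => /=; field. Qed.

Lemma act_aff_bpow z y : act (aff_step s) (bpow z) y = y + z%:~R.
Proof.
have act_nseq n (l : letter) e : aff_step s l =1 +%R^~ e ->
    act (aff_step s) (nseq n l) y = y + e *+ n.
  move=> hl; elim: n y => [|n IH] y; first by rewrite addr0.
  by rewrite [nseq _ _]/= act_cons IH hl mulrS; ring.
case: z => n; first by rewrite (act_nseq _ _ 1) // mulr1n.
by rewrite (act_nseq _ _ (-1)) // NegzE mulrNz -mulNrn.
Qed.

Let t := s^-1.

Lemma sum_indicator_height (n : nat) (x : int) : 0 <= x < n%:Z ->
  \sum_(j < n) ((x == j%:Z)%:Z)%:~R * t ^+ j = t ^+ absz x.
Proof.
move=> /andP[x0 xn]; have hx : (absz x < n)%N by lia.
rewrite (bigD1 (Ordinal hx)) //= big1 ?addr0.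
  by rewrite (_ : x == Posz (absz x)) ?mul1r //; apply/eqP; lia.
move=> j /eqP ne; rewrite (_ : (x == j%:Z) = false) ?mul0r //.
by apply/eqP => e; apply: ne; apply: val_inj => /=; lia.
Qed.

Lemma act_aff_expansion (n : nat) w x y :
  0 <= x - (size w)%:Z -> x + (size w)%:Z < n%:Z ->
  t ^+ absz (a_height x w) * act (aff_step s) w y =
  t ^+ absz x * y + \sum_(j < n) (b_count x w j%:Z)%:~R * t ^+ j.
Proof.
elim: w x y => [|l w IH] x y h1 h2.
  by rewrite /= big1 ?addr0 // => j _; rewrite mul0r.
rewrite act_cons; rewrite [size _]/= in h1 h2.
case: l h1 h2 => /= h1 h2.
- rewrite IH; [|lia|lia]; rewrite (_ : absz (x + 1) = (absz x).+1); last lia.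
  by rewrite exprS /t; congr (_ + _); field.
- rewrite IH; [|lia|lia]; rewrite (_ : absz x = (absz (x - 1)).+1); last lia.
  by rewrite exprS /t; congr (_ + _); field.
- rewrite IH; [|lia|lia].
  under eq_bigr => j _ do rewrite intrD mulrDl.
  by rewrite big_split /= sum_indicator_height; [ring | lia].
- rewrite IH; [|lia|lia].
  under eq_bigr => j _ do rewrite intrB mulrBl.
  by rewrite sumrB /= sum_indicator_height; [ring | lia].
Qed.

Lemma aff_ker_balanced (L : nat) w :
  act_ker (aff_step s) w -> (size w <= L)%N ->
  (L * (2 * L + 1)).+1%:R < `|t| ->
  a_height L w = L /\ forall z, b_count L w z = 0.
Proof.
move=> hk hs tB; set n := (2 * L + 1)%N.
have t1 : 1 < `|t| by apply: le_lt_trans tB; rewrite ler1n.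
have E y := @act_aff_expansion n w L y ltac:(lia) ltac:(lia).
have S0 : \sum_(j < n) (b_count L w j%:Z)%:~R * t ^+ j = 0.
  by have := E 0; rewrite hk !mulr0 add0r.
have height_abs : absz (a_height L w) = L.
  have := E 1; rewrite hk S0 !mulr1 addr0 => /(congr1 Num.norm).
  by rewrite !normrX => /ieexprIn ->; rewrite ?(gt_eqF t1) //; lra.
have := a_height_dist w L; split; first by lia.
have coefs0 : forall j, (j < n)%N -> b_count L w j%:Z = 0.
  apply: (@eq0_of_small_int_coefs _ t L n (fun j => b_count L w j%:Z)) => //.
  - lra.
  - by apply: lt_trans tB; rewrite -natrM ltr_nat.
  - by move=> i _; have := b_count_bound w L i; lia.
move=> z; case: (boolP (0 <= z < n%:Z)) => [/andP[z0 zn]|hz].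
  have -> : z = (absz z)%:Z by lia.
  by apply: coefs0; lia.
by apply: b_count_far; move: hz; rewrite negb_and -ltNge -leNgt; lia.
Qed.

End AffineAction.

Lemma BS_aff_ker (m q : int) w : m != 0 -> q != 0 -> BS m q w ->
  act_ker (aff_step (m%:~R / q%:~R)) w.
Proof.
move=> m0 q0 hw; have [mq0 qq0] : (m%:~R : rat) != 0 /\ (q%:~R : rat) != 0.
  by rewrite !intr_eq0.
have s0 : (m%:~R / q%:~R : rat) != 0 by rewrite mulf_neq0 ?invr_eq0.
apply: (nclosure_act_ker (aff_stepK s0) hw) => r -> y.
rewrite /bs_rel !act_cat /= !act_aff_bpow /= rmorphN /=.
by field; apply/andP.
Qed.

Definition probe_step (K : int) (x : letter) (p : int * int * int) : int * int * int :=
  let: (pos, y1, y2) := p in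
  match x with
  | LA => (pos + 1, y1, y2)
  | LAi => (pos - 1, y1, y2)
  | LB => if pos == K then (pos, y1 + 1, y2)
          else if pos == 0 then (pos, y1, y2 + y1) else (pos, y1, y2)
  | LBi => if pos == K then (pos, y1 - 1, y2)
          else if pos == 0 then (pos, y1, y2 - y1) else (pos, y1, y2)
  end.

Section ProbeAction.
Variable K : int.

Lemma probe_stepK x p : probe_step K (inv_letter x) (probe_step K x p) = p.
Proof.
case: p => [[pos y1] y2]; case: x => /=; rewrite ?addrK ?subrK //.
- case: (pos =P K) => [->|hK]; first by rewrite /= eqxx addrK.
  case: (pos =P 0) => [e0|h0] /=.
    by rewrite e0 in hK *; rewrite /= (negbTE (introN eqP hK)) addrK.
  by rewrite /= (negbTE (introN eqP hK)) (negbTE (introN eqP h0)).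
- case: (pos =P K) => [->|hK]; first by rewrite /= eqxx subrK.
  case: (pos =P 0) => [e0|h0] /=.
    by rewrite e0 in hK *; rewrite /= (negbTE (introN eqP hK)) subrK.
  by rewrite /= (negbTE (introN eqP hK)) (negbTE (introN eqP h0)).
Qed.

Lemma act_probe_away0 w x y1 y2 :
  0 < x - (size w)%:Z \/ x + (size w)%:Z < 0 ->
  act (probe_step K) w (x, y1, y2) = (a_height x w, y1 + b_count x w K, y2).
Proof.
elim: w x y1 => [|l w IH] x y1 h; first by rewrite /= addr0.
rewrite act_cons; rewrite [size _]/= in h.
case: l h => /= h; try by rewrite IH //; lia.
- rewrite (_ : (x == 0) = false); last by apply/eqP; lia.
  case: (x =P K) => [eK|hK]; rewrite IH /=; try lia; congr (_, _, _); ring.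
- rewrite (_ : (x == 0) = false); last by apply/eqP; lia.
  case: (x =P K) => [eK|hK]; rewrite IH /=; try lia; congr (_, _, _); ring.
Qed.

Lemma act_probe_awayK w x y1 y2 :
  K < x - (size w)%:Z \/ x + (size w)%:Z < K ->
  act (probe_step K) w (x, y1, y2) = (a_height x w, y1, y2 + b_count x w 0 * y1).
Proof.
elim: w x y2 => [|l w IH] x y2 h; first by rewrite /= mul0r addr0.
rewrite act_cons; rewrite [size _]/= in h.
case: l h => /= h; try by rewrite IH //; lia.
- rewrite (_ : (x == K) = false); last by apply/eqP; lia.
  case: (x =P 0) => [e0|h0]; rewrite IH /=; try lia; congr (_, _, _); ring.
- rewrite (_ : (x == K) = false); last by apply/eqP; lia.
  case: (x =P 0) => [e0|h0]; rewrite IH /=; try lia; congr (_, _, _); ring.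
Qed.

Lemma balanced_probe_ker (L : nat) w : 2 * L%:Z < K -> (size w <= L)%N ->
  a_height L w = L -> (forall z, b_count L w z = 0) -> act_ker (probe_step K) w.
Proof.
move=> hK hs he hc [[x y1] y2].
have hx : x = L%:Z + (x - L%:Z) by ring.
have ex : a_height x w = x by rewrite hx a_height_shift he.
have cx z : b_count x w z = 0.
  by rewrite hx -(subrK (x - L%:Z) z) b_count_shift hc.
have [/orP h|h] := boolP ((0 < x - (size w)%:Z) || (x + (size w)%:Z < 0)).
  by rewrite act_probe_away0 // ex cx addr0.
rewrite act_probe_awayK ?ex ?cx ?mul0r ?addr0 //.
by move: h; rewrite negb_or -!leNgt; lia.
Qed.

End ProbeAction.

Section DeepCommutator.
Variable K : nat.

Lemma act_probe_nseqA k x y1 y2 :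
  act (probe_step K) (nseq k LA) (x, y1, y2) = (x + k%:Z, y1, y2).
Proof.
elim: k x => [|k IH] x; first by rewrite addr0.
by rewrite [nseq _ _]/= act_cons /= IH; congr (_, _, _); lia.
Qed.

Lemma act_probe_nseqAi k x y1 y2 :
  act (probe_step K) (nseq k LAi) (x, y1, y2) = (x - k%:Z, y1, y2).
Proof.
elim: k x => [|k IH] x; first by rewrite subr0.
by rewrite [nseq _ _]/= act_cons /= IH; congr (_, _, _); lia.
Qed.

Lemma act_probe_bpow z y1 y2 :
  act (probe_step K) (bpow z) (K%:Z, y1, y2) = (K%:Z, y1 + z, y2).
Proof.
have act_nseq n l e : (forall y, probe_step K l (K%:Z, y, y2) = (K%:Z, y + e, y2)) ->
    act (probe_step K) (nseq n l) (K%:Z, y1, y2) = (K%:Z, y1 + e *~ n, y2).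
  move=> hl; elim: n y1 => [|n IH] y; first by rewrite addr0.
  by rewrite [nseq _ _]/= act_cons hl IH; congr (_, _, _); lia.
case: z => n.
  by rewrite (act_nseq _ _ 1) ?intz // => y /=; rewrite eqxx.
rewrite (act_nseq _ _ (-1)) => [|y /=]; last by rewrite eqxx.
by congr (_, _, _); rewrite NegzE; lia.
Qed.

Lemma act_probe_deep_comm m : (0 < K)%N ->
  act (probe_step K) (deep_comm m K) (0, 0, 0) = (0, 0, m ^+ K).
Proof.
move=> K0; have K0F : ((0 : int) == K%:Z) = false by apply/eqP; lia.
have hconj y1 y2 :
    act (probe_step K) (deep_conj m K) (0, y1, y2) = (0, y1 + m ^+ K, y2).
  by rewrite /deep_conj !act_cat act_probe_nseqA add0r act_probe_bpow act_probe_nseqAi subrr.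
rewrite /deep_comm act_cat hconj add0r !act_cat /= K0F add0r.
rewrite -{1}(add0r (m ^+ K)) -hconj act_invK; last exact: probe_stepK.
by rewrite /= K0F subr0.
Qed.

End DeepCommutator.

Lemma BS_short_probe_ker (m q : int) (L : nat) w :
  m != 0 -> (absz m * (L * (2 * L + 1)).+1 < absz q)%N ->
  BS m q w -> (size w <= L)%N -> act_ker (probe_step (2 * L + 1)%N) w.
Proof.
move=> m0 hq hw hs.
have q0 : q != 0 by apply: contraTneq hq => ->.
have s0 : (m%:~R / q%:~R : rat) != 0 by rewrite mulf_neq0 ?invr_eq0 ?intr_eq0.
have ratio : (L * (2 * L + 1)).+1%:R < `|(m%:~R / q%:~R : rat)^-1|.
  have mpos : 0 < `|m%:~R : rat| by rewrite normr_gt0 intr_eq0.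
  rewrite invf_div normrM normfV ltr_pdivlMr // -!intr_norm -!abszE.
  by rewrite -!pmulrn -natrM ltr_nat mulnC.
have [he hc] := aff_ker_balanced s0 (BS_aff_ker m0 q0 hw) hs ratio.
by apply: (balanced_probe_ker (L := L)) => //; lia.
Qed.

Theorem corollary3p2 (m : int) (hm : m != 0%R) (xi : nat -> int) (hxi : madic m xi)
  (xs : nat -> int) (hinf : tends_to_infty xs) (hconv : madic_converges m xs xi)
  (N : word -> Prop) (hN : is_normal N)
  (hlim : marked_converges (fun n => BS m (xs n)) N) :
  ~ finitely_presented N.
Proof.
move=> [rs hrs]; set L := \max_(r <- rs) size r; set K := (2 * L + 1)%N.
have hL r : r \in rs -> (size r <= L)%N by move=> hr; exact: leq_bigmax_seq.
have [n0 h0] := hlim L.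
have [n1 h1] := hlim (size (deep_comm m K)).
have [n2 h2] := hinf (absz m * (L * K).+1)%N.
set n := (n0 + n1 + n2)%N.
have hcomm : N (deep_comm m K).
  by apply/(h1 n _ _ (leqnn _)); [lia | exact: BS_deep_comm].
have hker : act_ker (probe_step K) (deep_comm m K).
  apply: (nclosure_act_ker (probe_stepK _) ((hrs _).1 hcomm)) => r hr.
  apply: (BS_short_probe_ker hm (h2 n _)) (hL r hr); first lia.
  apply/(h0 n _ _ (hL r hr)); first lia.
  by apply/hrs => N' _ HR; exact: HR.
have := hker (0, 0, 0); rewrite act_probe_deep_comm; last by rewrite /K addn1.
by case=> /eqP; rewrite expf_eq0 (negbTE hm) andbF.
Qed.
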